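(* Let $a>0$, $\mu\in(0,1]$, $\phi\in\mathscr A(a,\mu)$ and $b\ge1$. Then for every local stable leaf $\gamma$ and all $\rho_1,\rho_2\in\mathcal D(a,\mu,\gamma)$, $$\frac{\int_\gamma\phi\rho_1}{\int_\gamma\phi\rho_2}\le e^{b\,\theta_a(\rho_1,\rho_2)}\,\frac{\int_\gamma\rho_1}{\int_\gamma\rho_2}.$$
   Context: Local stable leaves $\gamma$ are the local stable manifolds of points of a uniformly hyperbolic set $\Lambda$ of a $C^2$ diffeomorphism $f$ of a compact Riemannian manifold (embedded disks with induced Riemannian measure $m_\gamma$); $\int_\gamma\phi\rho:=\int_\gamma\phi\rho\,dm_\gamma$; $d$ is the Riemannian distance, with $d\le1$ on the relevant domain $Q$. $\mathcal D(a,\mu,\gamma):=\{\rho:\gamma\to\mathbb R:\ \rho>0,\ \rho(x)\le\rho(y)e^{a d(x,y)^\mu}\ \forall x,y\in\gamma\}$ and $\mathscr A(a,\mu):=\{\phi:Q\to\mathbb R:\ \int_\gamma\phi\rho>0$ for every local stable leaf $\gamma$ and every $\rho\in\mathcal D(a,\mu,\gamma)\}$. Hilbert projective metric of a convex cone $C$: write $v\preceq w$ if $w-v\in C\cup\{0\}$; $\alpha(v_1,v_2):=\sup\{t>0: tv_1\preceq v_2\}$, $\beta(v_1,v_2):=\inf\{s>0: v_2\preceq sv_1\}$, $\theta(v_1,v_2):=\log(\beta/\alpha)$ (with value $+\infty$ if $\alpha=0$ or $\beta=\infty$). $\theta_a$ denotes the Hilbert projective metric of the cone $\mathcal D(a,\mu,\gamma)$.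 *)

From HB Require Import structures.
From mathcomp Require Import all_boot all_order all_algebra.
From mathcomp Require Import all_classical all_reals all_analysis.
Set Implicit Arguments. Unset Strict Implicit. Unset Printing Implicit Defensive.
Import Order.TTheory GRing.Theory Num.Theory.
Import numFieldNormedType.Exports.
Local Open Scope classical_set_scope.
Local Open Scope ring_scope.

(* Abstract setting: ambient measurable space M (the manifold), Riemannian
   distance [dist], a local stable leaf [gam] (a subset of M) carrying its
   induced Riemannian measure [m]. Densities on the leaf are represented as
   functions M -> R of which only the values on [gam] matter. *)

Definition leaf_int d (M : measurableType d) (R : realType)
  (m : {measure set M -> \bar R}) (gam : set M) (f : M -> R) : R :=
  Rintegral m gam f.

(* The cone D(a, mu, gam).  Densities are taken measurable on the leaf
   (needed for the integrals to make sense). *)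
Definition inD d (M : measurableType d) (R : realType) (dist : M -> M -> R)
  (a mu : R) (gam : set M) (rho : M -> R) : Prop :=
  measurable_fun gam rho /\
  (forall x, gam x -> 0 < rho x) /\
  (forall x y, gam x -> gam y -> rho x <= rho y * expR (a * (dist x y) `^ mu)).

Definition inA d (M : measurableType d) (R : realType) (dist : M -> M -> R)
  (Lf : Type) (gam : Lf -> set M) (m : Lf -> {measure set M -> \bar R})
  (a mu : R) (phi : M -> R) : Prop :=
  forall (l : Lf) (rho : M -> R), inD dist a mu (gam l) rho ->
    0 < leaf_int (m l) (gam l) (fun x => phi x * rho x).

(* Partial order of the cone D(a,mu,gam): v <= w iff w - v in D u {0}
   (functions being identified when equal on the leaf). *)
Definition cone_le d (M : measurableType d) (R : realType) (dist : M -> M -> R)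
  (a mu : R) (gam : set M) (v w : M -> R) : Prop :=
  inD dist a mu gam (fun x => w x - v x) \/ (forall x, gam x -> w x - v x = 0).

Definition hilbert_alpha d (M : measurableType d) (R : realType)
  (dist : M -> M -> R) (a mu : R) (gam : set M) (v1 v2 : M -> R) : \bar R :=
  ereal_sup [set t%:E | t in
    [set t : R | 0 < t /\ cone_le dist a mu gam (fun x => t * v1 x) v2]].

Definition hilbert_beta d (M : measurableType d) (R : realType)
  (dist : M -> M -> R) (a mu : R) (gam : set M) (v1 v2 : M -> R) : \bar R :=
  ereal_inf [set s%:E | s in
    [set s : R | 0 < s /\ cone_le dist a mu gam v2 (fun x => s * v1 x)]].

(* theta_a(v1, v2) = log(beta/alpha), equal to +oo when alpha = 0
   (or the defining set is empty) or beta = +oo. *)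
Definition hilbert_theta d (M : measurableType d) (R : realType)
  (dist : M -> M -> R) (a mu : R) (gam : set M) (v1 v2 : M -> R) : \bar R :=
  match hilbert_alpha dist a mu gam v1 v2, hilbert_beta dist a mu gam v1 v2 with
  | EFin al, EFin be => if 0 < al then (ln (be / al))%:E else +oo%E
  | _, _ => +oo%E
  end.

From HB Require Import structures.
From mathcomp Require Import all_boot all_order all_algebra.
From mathcomp Require Import all_classical all_reals all_analysis.
Import Order.TTheory GRing.Theory Num.Theory.
Import numFieldNormedType.Exports.
Local Open Scope classical_set_scope.
Local Open Scope ring_scope.

Set Implicit Arguments.
Unset Strict Implicit.

(* 1. Harnack bound: since d <= 1, a density rho in D satisfies
      rho x <= rho y * e^a on the leaf; so it is bounded, hence integrable
      (the leaf has finite measure), and its integral is positive as soon as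
      the leaf has positive measure.
   2. Cone monotonicity: if v <= w in the order of D, then w - v lies in D
      or vanishes on the leaf, so int w' v <= int w' w for every weight w'
      whose integral against densities of D is nonnegative.  Both phi (by
      definition of A(a,mu)) and the constant 1 are such weights, and
      homogeneity turns this into
      alpha(rho1,rho2) <= L rho2 / L rho1 <= beta(rho1,rho2)
      for L = int phi . and L = int . .
   3. With u = int phi rho2 / int phi rho1 and v = int rho2 / int rho1,
      the claim is the real inequality  1/u <= (beta/alpha)^b / v,  valid
      whenever alpha <= u, alpha <= v <= beta and b >= 1 (the cases where
      theta = +oo being trivial). *)

Section harnack.
Context d (M : measurableType d) (R : realType) (dist : M -> M -> R) (Q : set M).
Hypothesis Hdist : forall x y, Q x -> Q y -> 0 <= dist x y <= 1.
Variables (a mu : R).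
Hypotheses (Ha : 0 <= a) (Hmu : 0 <= mu).
Variables (G : set M).
Hypothesis HGQ : G `<=` Q.

Lemma powR_dist_le1 x y : Q x -> Q y -> dist x y `^ mu <= 1.
Proof.
move=> Qx Qy; have /andP[d0 d1] := Hdist Qx Qy.
have one_pow : (1 : R) `^ mu = 1 by rewrite powR1.
rewrite -[leRHS]one_pow.
by apply: ge0_ler_powR; rewrite ?nnegrE ?d0 ?ler01.
Qed.

Lemma inD_harnack rho : inD dist a mu G rho ->
  forall x y, G x -> G y -> rho x <= rho y * expR a.
Proof.
move=> [_ [Hpos Hlip]] x y Gx Gy; apply: (le_trans (Hlip x y Gx Gy)).
rewrite ler_pM2l ?Hpos // ler_expR -[leRHS]mulr1.
by apply: ler_wpM2l => //; apply: powR_dist_le1; apply: HGQ.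
Qed.

Lemma inD_bounded rho : inD dist a mu G rho -> [bounded rho x | x in G].
Proof.
move=> hD; have [[y Gy]|nG] := pselect (exists y, G y); last first.
  by exists 0; split; rewrite ?num_real // => z _ x Gx; case: nG; exists x.
exists (rho y * expR a); split; first by rewrite num_real.
move=> z zlt x Gx /=; rewrite ger0_norm ?ltW ?(proj1 (proj2 hD)) //.
exact: le_lt_trans (inD_harnack hD Gx Gy) zlt.
Qed.

Variables (m : {measure set M -> \bar R}).
Hypotheses (mG : measurable G) (Hfin : (m G < +oo)%E).

Lemma inD_integrable rho : inD dist a mu G rho -> m.-integrable G (EFin \o rho).
Proof.
move=> hD; apply: measurable_bounded_integrable => //; first by case: hD.
exact: inD_bounded.
Qed.

Lemma inD_mul_integrable phi rho :
  m.-integrable G (EFin \o phi) -> inD dist a mu G rho ->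
  m.-integrable G (EFin \o (fun x => phi x * rho x)).
Proof.
move=> Hphi hD.
have := integrableMl mG Hphi (proj1 hD) (inD_bounded hD).
by apply: eq_integrable => // x _ /=; rewrite EFinM.
Qed.

(* On a leaf of positive measure, densities of the cone have positive
   integral: they are bounded below by rho y / e^a. *)
Lemma inD_Rintegral_gt0 rho : (0 < m G)%E ->
  inD dist a mu G rho -> 0 < Rintegral m G rho.
Proof.
move=> Hpos hD; have [[y Gy]|nG] := pselect (exists y, G y); last first.
  suff G0 : G = set0 by move: Hpos; rewrite G0 measure0 ltxx.
  by apply/seteqP; split => x // Gx; apply: nG; exists x.
set c := rho y / expR a.
have c0 : 0 < c by rewrite divr_gt0 ?(proj1 (proj2 hD)) ?expR_gt0.
have ic : m.-integrable G (EFin \o cst c).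
  by apply: measurable_bounded_integrable => //; exact: bounded_cst.
apply: (@lt_le_trans _ _ (Rintegral m G (cst c))).
  by rewrite Rintegral_cst // mulr_gt0 // fine_gt0 // Hpos Hfin.
apply: (le_Rintegral mG ic (inD_integrable hD)) => x Gx.
by rewrite ler_pdivrMr ?expR_gt0 //; apply: inD_harnack.
Qed.

End harnack.

Lemma Rintegral_neq0_measure_gt0 d (M : measurableType d) (R : realType)
  (m : {measure set M -> \bar R}) (G : set M) (f : M -> R) :
  measurable G -> m.-integrable G (EFin \o f) ->
  Rintegral m G f != 0 -> (0 < m G)%E.
Proof.
move=> mG If; apply: contraNT; rewrite lt0e measure_ge0 andbT negbK => /eqP m0.
rewrite /Rintegral null_set_integral //.
by case/integrableP: If.
Qed.

Section cone_order.
Context d (M : measurableType d) (R : realType) (dist : M -> M -> R).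
Variables (a mu : R) (G : set M) (m : {measure set M -> \bar R}).
Hypothesis mG : measurable G.

Local Notation alpha := (hilbert_alpha dist a mu G).
Local Notation beta := (hilbert_beta dist a mu G).

Lemma cone_le_weighted_Rintegral (w u v : M -> R) :
  (forall rho, inD dist a mu G rho -> 0 <= Rintegral m G (fun x => w x * rho x)) ->
  m.-integrable G (EFin \o (fun x => w x * u x)) ->
  m.-integrable G (EFin \o (fun x => w x * v x)) ->
  cone_le dist a mu G u v ->
  Rintegral m G (fun x => w x * u x) <= Rintegral m G (fun x => w x * v x).
Proof.
move=> Hw iu iv huv; rewrite -subr_ge0 -RintegralB //.
under eq_Rintegral do rewrite -mulrBr.
case: huv => [hD|Hz]; first exact: Hw.
have -> : Rintegral m G (fun x => w x * (v x - u x)) = Rintegral m G (cst 0).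
  by apply: eq_Rintegral => x; rewrite inE => Gx /=; rewrite Hz // mulr0.
by rewrite Rintegral_cst // mul0r.
Qed.

Lemma weighted_RintegralZ (w f : M -> R) (t : R) :
  m.-integrable G (EFin \o (fun x => w x * f x)) ->
  m.-integrable G (EFin \o (fun x => w x * (t * f x))) /\
  Rintegral m G (fun x => w x * (t * f x)) = t * Rintegral m G (fun x => w x * f x).
Proof.
move=> hf; split.
  have := integrableZl mG t hf.
  by apply: eq_integrable => // x _ /=; rewrite mulrCA EFinM.
by rewrite -RintegralZl //; apply: eq_Rintegral => x _; rewrite mulrCA.
Qed.

(* A weighted integral L, nonnegative on the cone and positive at v1, is
   squeezed by the Hilbert quantities: alpha(v1,v2) <= L v2 / L v1 <= beta(v1,v2),
   since t v1 <= v2 gives t L v1 <= L v2 and v2 <= s v1 gives L v2 <= s L v1. *)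
Lemma hilbert_weighted_bounds (w v1 v2 : M -> R) :
  (forall rho, inD dist a mu G rho -> 0 <= Rintegral m G (fun x => w x * rho x)) ->
  m.-integrable G (EFin \o (fun x => w x * v1 x)) ->
  m.-integrable G (EFin \o (fun x => w x * v2 x)) ->
  let L f := Rintegral m G (fun x => w x * f x) in
  0 < L v1 -> (alpha v1 v2 <= (L v2 / L v1)%:E)%E /\ ((L v2 / L v1)%:E <= beta v1 v2)%E.
Proof.
move=> Hw i1 i2 L L1; split.
- apply/ereal_supP => _ [t [t0 ht] <-]; rewrite lee_fin ler_pdivlMr //.
  have [it Lt] := weighted_RintegralZ t i1.
  by rewrite /L -Lt; exact: (cone_le_weighted_Rintegral Hw it i2 ht).
- apply/ereal_infP => _ [s [s0 hs] <-]; rewrite lee_fin ler_pdivrMr //.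
  have [is_ Ls] := weighted_RintegralZ s i1.
  by rewrite /L -Ls; exact: (cone_le_weighted_Rintegral Hw i2 is_ hs).
Qed.

Lemma hilbert_Rintegral_bounds (v1 v2 : M -> R) :
  m.-integrable G (EFin \o v1) -> m.-integrable G (EFin \o v2) ->
  0 < Rintegral m G v1 ->
  (alpha v1 v2 <= (Rintegral m G v2 / Rintegral m G v1)%:E)%E /\
  ((Rintegral m G v2 / Rintegral m G v1)%:E <= beta v1 v2)%E.
Proof.
have unit_weight f : Rintegral m G (fun x => 1 * f x) = Rintegral m G f.
  by apply: eq_Rintegral => x _; rewrite mul1r.
have unit_integrable f : m.-integrable G (EFin \o f) ->
    m.-integrable G (EFin \o (fun x => 1 * f x)).
  by apply: eq_integrable => // x _ /=; rewrite mul1r.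
have unit_nonneg rho : inD dist a mu G rho -> 0 <= Rintegral m G (fun x => 1 * rho x).
  move=> hD; rewrite unit_weight; apply: Rintegral_ge0 => x Gx.
  exact: ltW (proj1 (proj2 hD) x Gx).
move=> i1 i2 I1.
have := hilbert_weighted_bounds unit_nonneg (unit_integrable _ i1) (unit_integrable _ i2).
by rewrite /= !unit_weight; apply.
Qed.

End cone_order.

Lemma hilbert_ratio_estimate (R : realType) (al be u v b : R) :
  0 < al -> al <= u -> al <= v -> v <= be -> 1 <= b ->
  u^-1 <= expR (b * ln (be / al)) * v^-1.
Proof.
move=> al0 alu alv vbe b1.
have be0 : 0 < be by rewrite (lt_le_trans al0) // (le_trans alv).
have r1 : 1 <= be / al by rewrite ler_pdivlMr // mul1r (le_trans alv).
have r_le_exp : be / al <= expR (b * ln (be / al)).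
  rewrite -[leLHS]lnK ?posrE ?(lt_le_trans ltr01) // ler_expR.
  by rewrite -[leLHS]mul1r ler_wpM2r // ln_ge0.
apply: (@le_trans _ _ al^-1); first by rewrite lef_pV2 ?posrE // (lt_le_trans al0).
have al_inv : al^-1 = be / al * be^-1 by rewrite mulrAC divff ?mul1r // gt_eqF.
rewrite {1}al_inv; apply: ler_pM => //; first by rewrite divr_ge0 ?ltW.
  by rewrite invr_ge0 ltW.
by rewrite lef_pV2 ?posrE // (lt_le_trans al0).
Qed.

Lemma hilbert_theta_estimate d (M : measurableType d) (R : realType)
  (dist : M -> M -> R) (a mu : R) (G : set M) (v1 v2 : M -> R) (u v b : R) :
  0 < u -> 0 < v -> 1 <= b ->
  (hilbert_alpha dist a mu G v1 v2 <= u%:E)%E ->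
  (hilbert_alpha dist a mu G v1 v2 <= v%:E)%E ->
  (v%:E <= hilbert_beta dist a mu G v1 v2)%E ->
  ((u^-1)%:E <= expeR (b%:E * hilbert_theta dist a mu G v1 v2) * (v^-1)%:E)%E.
Proof.
move=> u0 v0 b1 alu alv vbe; have b0 : 0 < b := lt_le_trans ltr01 b1.
have infinite_case : ((u^-1)%:E <= expeR (b%:E * +oo) * (v^-1)%:E)%E.
  by rewrite gt0_muley ?lte_fin // /= gt0_mulye ?lte_fin ?invr_gt0 // leey.
rewrite /hilbert_theta; move: alu alv vbe.
case: (hilbert_alpha _ _ _ _ _ _) => [al| |] // alu alv;
  case: (hilbert_beta _ _ _ _ _ _) => [be| |] // vbe; case: ifP => // al0.
move: alu alv vbe; rewrite !lee_fin => alu alv vbe.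
exact: hilbert_ratio_estimate.
Qed.

Unset Implicit Arguments.

Theorem lemma4p3 (d : measure_display) (M : measurableType d) (R : realType)
  (dist : M -> M -> R) (Q : set M)
  (Lf : Type) (gam : Lf -> set M) (m : Lf -> {measure set M -> \bar R})
  (Hdist : forall x y, Q x -> Q y -> 0 <= dist x y <= 1)
  (HgamQ : forall l, gam l `<=` Q)
  (Hgam_meas : forall l, measurable (gam l))
  (Hm_fin : forall l, (m l (gam l) < +oo)%E)
  (a mu : R) (phi : M -> R) (b : R)
  (Hphi_int : forall l, (m l).-integrable (gam l) (EFin \o phi))
  (Ha : 0 < a) (Hmu : 0 < mu <= 1) (HA : inA dist gam m a mu phi) (Hb : 1 <= b) :
  forall (l : Lf) (rho1 rho2 : M -> R),
    inD dist a mu (gam l) rho1 -> inD dist a mu (gam l) rho2 ->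
    ((leaf_int (m l) (gam l) (fun x => phi x * rho1 x)
       / leaf_int (m l) (gam l) (fun x => phi x * rho2 x))%:E
     <= expeR (b%:E * hilbert_theta dist a mu (gam l) rho1 rho2)
        * (leaf_int (m l) (gam l) rho1 / leaf_int (m l) (gam l) rho2)%:E)%E.
Proof.
move=> l rho1 rho2 h1 h2; rewrite /leaf_int.
have a0 := ltW Ha; have /andP[mu_gt0 _] := Hmu; have mu0 := ltW mu_gt0.
have mG := Hgam_meas l; have Hfin := Hm_fin l; have HGQ := HgamQ l.
have i1 := inD_integrable Hdist a0 mu0 HGQ mG Hfin h1.
have i2 := inD_integrable Hdist a0 mu0 HGQ mG Hfin h2.
have ip1 := inD_mul_integrable Hdist a0 mu0 HGQ mG (Hphi_int l) h1.
have ip2 := inD_mul_integrable Hdist a0 mu0 HGQ mG (Hphi_int l) h2.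
have [P1 P2] := (HA l rho1 h1, HA l rho2 h2).
have mpos := Rintegral_neq0_measure_gt0 mG ip1 (lt0r_neq0 P1).
have I1 := inD_Rintegral_gt0 Hdist a0 mu0 HGQ mG Hfin mpos h1.
have I2 := inD_Rintegral_gt0 Hdist a0 mu0 HGQ mG Hfin mpos h2.
have [alpha_phi _] :=
  hilbert_weighted_bounds mG (fun rho hD => ltW (HA l rho hD)) ip1 ip2 P1.
have [alpha_I beta_I] := hilbert_Rintegral_bounds dist a mu mG i1 i2 I1.
have := hilbert_theta_estimate (divr_gt0 P2 P1) (divr_gt0 I2 I1) Hb
  alpha_phi alpha_I beta_I.
by rewrite !invf_div.
Qed.
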